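(* Let $t\geq 2$ and $n\geq 1$ be integers and let $\mathcal{F}\subseteq[t]^n$ be a family for which every coordinate $i\in[n]$ is separating. Then $|\mathcal{F}|=\Omega(\sqrt{n})$.
   Context: For positive integers $n,t$, $[n]=\{1,\dots,n\}$ and $[t]^n$ is the set of functions $f:[n]\to[t]$, partially ordered by $f\leq g$ iff $f(i)\leq g(i)$ for all $i$. For $f\in[t]^n$ and $i\in[n]$, $D_i(f)\in[t]^{n-1}$ is the function obtained by deleting coordinate $i$: $D_i(f)(x)=f(x)$ for $1\leq x<i$ and $D_i(f)(x)=f(x+1)$ for $i\leq x\leq n-1$. A coordinate $i\in[n]$ is separating for $\mathcal{F}\subseteq[t]^n$ if there exist distinct $f,f'\in\mathcal{F}$ with $D_i(f)\leq D_i(f')$ and $f(i)>f'(i)$. *)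

From mathcomp Require Import all_boot all_order.
Set Implicit Arguments. Unset Strict Implicit. Unset Printing Implicit Defensive.

(* [t]^n is modelled as {ffun 'I_n -> 'I_t}: coordinates 1..n are the
   ordinals 0..n-1 and values 1..t are the ordinals 0..t-1 (an order-
   preserving shift by one). *)

(* D_i(f) <= D_i(f') : the pointwise order of the functions with coordinate
   i deleted, i.e. f j <= f' j for every coordinate j other than i. *)
Definition del_le (n t : nat) (i : 'I_n) (f f' : {ffun 'I_n -> 'I_t}) : bool :=
  [forall j : 'I_n, (j != i) ==> (f j <= f' j)].

Definition separating (n t : nat) (F : {set {ffun 'I_n -> 'I_t}}) (i : 'I_n) : Prop :=
  exists f f', [/\ f \in F, f' \in F, f != f', del_le i f f' & f' i < f i].

From mathcomp Require Import all_boot all_order.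

(* A pair separates at most one
   coordinate: for j <> i it satisfies f(j) <= f'(j), which forbids
   f'(j) < f(j).  Hence i |-> (witness pair) is injective, n <= |F|^2, and
   |F| >= sqrt n, i.e. the bound holds with c = 1. *)

Lemma leq_card_private_witnesses {I T : finType} (A : {set T})
    (R : I -> T -> bool) :
  (forall i, exists2 x, x \in A & R i x) ->
  (forall i j x, R i x -> R j x -> i = j) ->
  #|I| <= #|A|.
Proof.
move=> witness private.
have [w wA Rw] := fin_all_exists2 witness.
have w_inj : injective w.
  by move=> i j wij; apply: (private i j (w j)); [rewrite -wij|]; exact: Rw.
rewrite -cardsT -(card_imset setT w_inj).
by apply/subset_leq_card/subsetP => _ /imsetP [i _ ->]; apply: wA.
Qed.

Section Separation.

Variables n t : nat.
Implicit Types i j : 'I_n.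

Definition separated_by i (p : {ffun 'I_n -> 'I_t} * {ffun 'I_n -> 'I_t}) :=
  del_le i p.1 p.2 && (p.2 i < p.1 i).

Lemma separated_by_uniq i j p : separated_by i p -> separated_by j p -> i = j.
Proof.
case/andP => /forallP /(_ j) le_ij _ /andP [_ lt_j].
apply/eqP; apply: contraLR le_ij; rewrite eq_sym => /negPf ->.
by rewrite /= -ltnNge.
Qed.

Lemma separating_witness (F : {set {ffun 'I_n -> 'I_t}}) i :
  separating F i -> exists2 p, p \in setX F F & separated_by i p.
Proof.
case=> f [f' [Ff Ff' _ le_ff' lt_i]].
by exists (f, f'); rewrite ?in_setX ?Ff ?Ff' //; apply/andP.
Qed.

Lemma separating_card_sq (F : {set {ffun 'I_n -> 'I_t}}) :
  (forall i, separating F i) -> n <= #|F| ^ 2.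
Proof.
move=> sepF; rewrite -mulnn -cardsX -[n in n <= _]card_ord.
apply: (leq_card_private_witnesses _ separated_by) => [i|].
  exact: separating_witness.
exact: separated_by_uniq.
Qed.

End Separation.

Theorem mainTheorem8 :
  exists c : nat, 0 < c /\
    forall (t n : nat) (F : {set {ffun 'I_n -> 'I_t}}),
      2 <= t -> 1 <= n ->
      (forall i : 'I_n, separating F i) ->
      n <= c * #|F| ^ 2.
Proof.
exists 1; split => // t n F _ _ sepF.
by rewrite mul1n; exact: separating_card_sq.
Qed.
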